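(* Let $d\ge1$, $\sigma>0$ with $1<\sigma d<2$, and $a>0$. Then there is no nontrivial solution $Q$ of $$Q''+\frac{d-1}{\rho}Q'-Q+ia\left(\frac{1}{\sigma}Q+\rho Q'\right)+|Q|^{2\sigma}Q=0,\ \ 0<\rho<\infty,\qquad Q'(0)=0,$$ such that $Q(\rho)\sim c_1\rho^{-i/a-1/\sigma}$ as $\rho\to\infty$ for some $c_1\in\mathbb{C}$ (i.e., in the large-$\rho$ asymptotic decomposition $Q\sim c_1Q_1+c_2Q_2$ with $Q_1\sim\rho^{-i/a-1/\sigma}$ and $Q_2\sim e^{-ia\rho^2/2}\rho^{i/a-d+1/\sigma}$, one always has $c_2\neq0$). *)

From Stdlib Require Import Reals.
From Coquelicot Require Import Coquelicot.
Open Scope R_scope.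

Definition rpow_nn (x y : R) : R := if Rlt_dec 0 x then Rpower x y else 0.

Definition abs_pow (z : C) (s : R) : R := rpow_nn (Cmod z) (2 * s).

(* rho^(i/a + 1/sigma) = rho^(1/sigma) * exp(i ln(rho)/a), for rho > 0;
   this is 1 / Q_1(rho) where Q_1(rho) = rho^(-i/a - 1/sigma). *)
Definition inv_Q1 (a s rho : R) : C :=
  Cmult (RtoC (Rpower rho (1 / s)))
        (cos (ln rho / a), sin (ln rho / a)).

(* Write Q = u + i v, m = d - 1 and s = 1/sigma, so that s < m + 1 < 2 s.
   The Pohozaev-type energy
     E(t) = t^m Im(conj Q Q')(t) + a t^(m+1) |Q(t)|^2 / 2
   satisfies E' = a ((m+1)/2 - s) t^m |Q|^2 <= 0, so E is nonincreasing.
   The flux t^m Q' obeys an equation whose rotation term i a t Q' does not change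
   |t^m Q'|, so |t^m Q'| grows at most like the integral of t^m |Q|.  At infinity
   |Q| = O(t^-s) gives |t^m Q'| = O(t^(m+1-s)), hence E(t) = O(t^(m+1-2s)) -> 0
   and E >= 0.  Near the origin Q(t) = Q(0) + o(t) gives E <= 0.  Hence E = 0,
   so E' = 0 and Q vanishes. *)

From Stdlib Require Import Reals Lra Lia.
From Coquelicot Require Import Coquelicot.
Open Scope R_scope.

Lemma Rabs_dot_le (a b c d : R) :
  Rabs (a * c + b * d) <= sqrt (a ^ 2 + b ^ 2) * sqrt (c ^ 2 + d ^ 2).
Proof.
  pose proof (sqrt_cauchy a b c d) as Hab.
  pose proof (sqrt_cauchy (- a) (- b) c d) as Hnab.
  rewrite <- !Rsqr_neg, !Rsqr_pow2 in Hnab. rewrite !Rsqr_pow2 in Hab.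
  apply Rabs_le; lra.
Qed.

Lemma diff_le_of_derive_le (f g df dg : R -> R) (x y : R) : x <= y ->
  (forall z, x <= z <= y ->
     is_derive f z (df z) /\ is_derive g z (dg z) /\ df z <= dg z) ->
  f y - f x <= g y - g x.
Proof.
  intros Hxy H.
  assert (Hin : forall z, Rmin x y <= z <= Rmax x y -> x <= z <= y).
  { intros z. rewrite Rmin_left, Rmax_right by lra. tauto. }
  destruct (MVT_gen (fun z => f z - g z) x y (fun z => df z - dg z)) as [c [Hc E]].
  - intros z Hz. destruct (H z (Hin z (conj (Rlt_le _ _ (proj1 Hz)) (Rlt_le _ _ (proj2 Hz)))))
      as [Df [Dg _]].
    exact (is_derive_minus _ _ _ _ _ Df Dg).
  - intros z Hz. destruct (H z (Hin z Hz)) as [Df [Dg _]].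
    apply continuity_pt_filterlim, (ex_derive_continuous (fun z => f z - g z)).
    eexists. exact (is_derive_minus _ _ _ _ _ Df Dg).
  - destruct (H c (Hin c Hc)) as [_ [_ Hle]].
    assert ((df c - dg c) * (y - x) <= 0) by (apply Rmult_le_0_r; lra).
    lra.
Qed.

Lemma no_steep_sublinear (phi dphi : R -> R) (c delta : R) : 0 < c -> 0 < delta ->
  (forall x, 0 < x <= delta -> is_derive phi x (dphi x) /\ c <= dphi x) ->
  (forall x, 0 < x <= delta -> Rabs (phi x) <= c / 2 * x) -> False.
Proof.
  intros Hc Hd Dphi Hphi.
  assert (Hgrow : (fun x => c * x) delta - (fun x => c * x) (delta / 4)
                  <= phi delta - phi (delta / 4)).
  { apply (diff_le_of_derive_le _ _ (fun _ => c) dphi); [lra|].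
    intros z Hz. destruct (Dphi z ltac:(lra)) as [D Hle].
    split; [auto_derive; [exact I|ring]|]. split; assumption. }
  simpl in Hgrow.
  pose proof (Hphi delta ltac:(lra)) as H1. pose proof (Hphi (delta / 4) ltac:(lra)) as H2.
  apply Rabs_le_between in H1. apply Rabs_le_between in H2.
  nra.
Qed.

Lemma Rpower_pos (x y : R) : 0 < Rpower x y.
Proof. apply exp_pos. Qed.

Lemma Rpower_ge_1 (t e : R) : 1 <= t -> 0 <= e -> 1 <= Rpower t e.
Proof. intros Ht He. rewrite <- (Rpower_O t) by lra. apply Rle_Rpower; lra. Qed.

Lemma Rpower_le_1 (t e : R) : 1 <= t -> e <= 0 -> Rpower t e <= 1.
Proof. intros Ht He. rewrite <- (Rpower_O t) by lra. apply Rle_Rpower; lra. Qed.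

Lemma Rpower_eventually_lt (e eps : R) : e < 0 -> 0 < eps ->
  exists T, 0 < T /\ forall t, T <= t -> Rpower t e < eps.
Proof.
  intros He Heps. exists (exp (ln eps / e + 1)). split; [apply exp_pos|].
  intros t Ht. pose proof (exp_pos (ln eps / e + 1)).
  unfold Rpower. rewrite <- (exp_ln eps) by lra. apply exp_increasing.
  assert (Hln : ln eps / e + 1 <= ln t).
  { rewrite <- (ln_exp (ln eps / e + 1)). apply ln_le; lra. }
  assert (e * ln t <= e * (ln eps / e + 1)) by (apply Rmult_le_compat_neg_l; lra).
  replace (e * (ln eps / e + 1)) with (ln eps + e) in * by (field; lra).
  lra.
Qed.

Lemma is_derive_fst (f : R -> C) (x : R) (l : C) :
  is_derive f x l -> is_derive (fun t => fst (f t)) x (fst l).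
Proof.
  intros H. apply (filterdiff_comp' f fst x _ fst H), filterdiff_linear.
  apply (@is_linear_fst R_AbsRing R_NormedModule R_NormedModule).
Qed.

Lemma is_derive_snd (f : R -> C) (x : R) (l : C) :
  is_derive f x l -> is_derive (fun t => snd (f t)) x (snd l).
Proof.
  intros H. apply (filterdiff_comp' f snd x _ snd H), filterdiff_linear.
  apply (@is_linear_snd R_AbsRing R_NormedModule R_NormedModule).
Qed.

(* [u + i v] solves the radial equation with [m = d - 1], [s = 1/sigma] and
   [P = |u + i v|^(2 sigma)]; [u1 + i v1] and [u2 + i v2] are its first two derivatives. *)
Section RadialSystem.

Variables (m : nat) (s a : R) (u v u1 v1 u2 v2 P : R -> R).

Local Notation sqnorm t := (u t ^ 2 + v t ^ 2).

Hypothesis a_pos : 0 < a.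
Hypothesis s_pos : 0 < s.
Hypothesis P_nonneg : forall t, 0 <= P t.
Hypothesis P_bounded :
  forall M, exists KP, forall t, 0 < t -> sqnorm t <= M -> P t <= KP.
Hypothesis Du : forall t, 0 < t -> is_derive u t (u1 t).
Hypothesis Dv : forall t, 0 < t -> is_derive v t (v1 t).
Hypothesis Du1 : forall t, 0 < t -> is_derive u1 t (u2 t).
Hypothesis Dv1 : forall t, 0 < t -> is_derive v1 t (v2 t).
Hypothesis ode_re : forall t, 0 < t ->
  u2 t + INR m / t * u1 t - u t - a * (s * v t + t * v1 t) + P t * u t = 0.
Hypothesis ode_im : forall t, 0 < t ->
  v2 t + INR m / t * v1 t - v t + a * (s * u t + t * u1 t) + P t * v t = 0.

Lemma u2_eq t : 0 < t ->
  u2 t = - (INR m / t * u1 t) + u t + a * (s * v t + t * v1 t) - P t * u t.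
Proof. intros Ht. pose proof (ode_re t Ht). lra. Qed.

Lemma v2_eq t : 0 < t ->
  v2 t = - (INR m / t * v1 t) + v t - a * (s * u t + t * u1 t) - P t * v t.
Proof. intros Ht. pose proof (ode_im t Ht). lra. Qed.

Definition energy t :=
  t ^ m * (v1 t * u t - u1 t * v t) + a * (t * t ^ m) * sqnorm t / 2.

Lemma is_derive_energy t : 0 < t ->
  is_derive energy t (a * ((INR m + 1) / 2 - s) * t ^ m * sqnorm t).
Proof.
  intros Ht.
  assert (Hdu : Derive (fun x => u x) t = u1 t) by exact (is_derive_unique _ _ _ (Du t Ht)).
  assert (Hdv : Derive (fun x => v x) t = v1 t) by exact (is_derive_unique _ _ _ (Dv t Ht)).
  assert (Hdu1 : Derive (fun x => u1 x) t = u2 t) by exact (is_derive_unique _ _ _ (Du1 t Ht)).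
  assert (Hdv1 : Derive (fun x => v1 x) t = v2 t) by exact (is_derive_unique _ _ _ (Dv1 t Ht)).
  unfold energy. auto_derive.
  - repeat split; eexists; eauto.
  - rewrite Hdu, Hdv, Hdu1, Hdv1, (u2_eq t Ht), (v2_eq t Ht).
    match goal with |- ?A = ?B => change (@eq R A B) end.
    destruct m as [|k]; simpl pow; simpl pred; [rewrite INR_0|]; field; lra.
Qed.

Lemma energy_nonincreasing x y : INR m + 1 < 2 * s -> 0 < x <= y -> energy y <= energy x.
Proof.
  intros Hsub Hxy.
  assert (Hdiff : energy y - energy x <= (fun _ => 0) y - (fun _ => 0) x).
  { apply (diff_le_of_derive_le energy (fun _ => 0)
      (fun t => a * ((INR m + 1) / 2 - s) * t ^ m * sqnorm t) (fun _ => 0)); [lra|].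
    intros z Hz. split; [apply is_derive_energy; lra|].
    split; [auto_derive; [exact I | reflexivity]|].
    assert (0 < z ^ m) by (apply pow_lt; lra).
    assert (0 <= z ^ m * sqnorm z) by (apply Rmult_le_pos; nra).
    assert (a * ((INR m + 1) / 2 - s) < 0) by nra.
    rewrite Rmult_assoc. nra. }
  simpl in Hdiff. lra.
Qed.

(* The [+ 1] keeps the square root differentiable where [Q'] vanishes. *)
Definition flux_norm t := sqrt ((t ^ m * u1 t) ^ 2 + (t ^ m * v1 t) ^ 2 + 1).

Definition flux_norm_rate t :=
  t ^ m * t ^ m * ((1 - P t) * (u t * u1 t + v t * v1 t) + a * s * (u1 t * v t - u t * v1 t))
  / flux_norm t.

Lemma flux_norm_pos t : 0 < flux_norm t.
Proof. apply sqrt_lt_R0. nra. Qed.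

(* The rotation term [i a t Q'] of the equation is orthogonal to [Q'],
   so it does not enter the derivative of [|t^m Q'|]. *)
Lemma is_derive_flux_norm t : 0 < t -> is_derive flux_norm t (flux_norm_rate t).
Proof.
  intros Ht.
  assert (Hdu1 : Derive (fun x => u1 x) t = u2 t) by exact (is_derive_unique _ _ _ (Du1 t Ht)).
  assert (Hdv1 : Derive (fun x => v1 x) t = v2 t) by exact (is_derive_unique _ _ _ (Dv1 t Ht)).
  assert (Hpos : 0 < (t ^ m * u1 t) ^ 2 + (t ^ m * v1 t) ^ 2 + 1) by nra.
  pose proof (flux_norm_pos t) as HF.
  unfold flux_norm_rate, flux_norm in *. auto_derive.
  - repeat split; try (eexists; eauto). exact Hpos.
  - rewrite Hdu1, Hdv1, (u2_eq t Ht), (v2_eq t Ht).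
    set (F := sqrt ((t ^ m * u1 t) ^ 2 + (t ^ m * v1 t) ^ 2 + 1)) in *.
    match goal with |- context [sqrt ?X] =>
      replace (sqrt X) with F by (unfold F; f_equal; ring) end.
    clearbody F.
    destruct m as [|k]; simpl pow; simpl pred; [rewrite INR_0|];
      match goal with |- ?A = ?B => change (@eq R A B) end; field; lra.
Qed.

Lemma Rabs_flux_norm_rate_le t : 0 < t ->
  Rabs (flux_norm_rate t) <= t ^ m * (1 + P t + a * s) * sqrt (sqnorm t).
Proof.
  intros Ht.
  set (X := t ^ m * u1 t). set (Y := t ^ m * v1 t).
  set (r := sqrt (sqnorm t)). set (F := flux_norm t).
  assert (Htm : 0 < t ^ m) by (apply pow_lt; lra).
  assert (HF : 0 < F) by apply flux_norm_pos.
  assert (Hr : 0 <= r) by apply sqrt_pos.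
  assert (Hq : sqrt (X ^ 2 + Y ^ 2) <= F)
    by (unfold F, flux_norm; fold X Y; apply sqrt_le_1_alt; lra).
  assert (H1 := Rabs_dot_le (u t) (v t) X Y).
  assert (H2 := Rabs_dot_le (v t) (- u t) X Y).
  replace ((- u t) ^ 2) with (u t ^ 2) in H2 by ring.
  rewrite (Rplus_comm (v t ^ 2)) in H2. fold r in H1, H2.
  assert (HP : Rabs (1 - P t) <= 1 + P t) by (apply Rabs_le; pose proof (P_nonneg t); lra).
  assert (Hnum : Rabs ((1 - P t) * (u t * X + v t * Y) + a * s * (v t * X + - u t * Y))
                 <= (1 + P t + a * s) * (r * F)).
  { eapply Rle_trans; [apply Rabs_triang|]. rewrite (Rabs_mult (1 - P t)), (Rabs_mult (a * s)), (Rabs_pos_eq (a * s)) by nra.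
    pose proof (Rabs_pos (1 - P t)). pose proof (Rabs_pos (u t * X + v t * Y)).
    assert (r * sqrt (X ^ 2 + Y ^ 2) <= r * F) by (apply Rmult_le_compat_l; lra).
    assert (Rabs (1 - P t) * Rabs (u t * X + v t * Y) <= (1 + P t) * (r * F))
      by (apply Rmult_le_compat; lra).
    assert (a * s * Rabs (v t * X + - u t * Y) <= a * s * (r * F))
      by (apply Rmult_le_compat_l; nra).
    lra. }
  replace (flux_norm_rate t)
    with (t ^ m * ((1 - P t) * (u t * X + v t * Y) + a * s * (v t * X + - u t * Y)) / F)
    by (unfold flux_norm_rate; fold F; unfold X, Y; field; lra).
  rewrite Rabs_div, Rabs_mult, (Rabs_pos_eq (t ^ m)), (Rabs_pos_eq F) by lra.
  apply Rle_div_l; [lra|].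
  replace (t ^ m * (1 + P t + a * s) * r * F) with (t ^ m * ((1 + P t + a * s) * (r * F)))
    by ring.
  apply Rmult_le_compat_l; lra.
Qed.

Lemma flux_norm_variation (g dg : R -> R) x y : 0 < x <= y ->
  (forall z, x <= z <= y -> is_derive g z (dg z) /\
     z ^ m * (1 + P z + a * s) * sqrt (sqnorm z) <= dg z) ->
  Rabs (flux_norm y - flux_norm x) <= g y - g x.
Proof.
  intros Hxy Hg. apply Rabs_le_between. split.
  - assert (Hlow : (fun z => - g z) y - (fun z => - g z) x <= flux_norm y - flux_norm x).
    { apply (diff_le_of_derive_le (fun z => - g z) flux_norm (fun z => - dg z) flux_norm_rate);
        [lra|].
      intros z Hz. destruct (Hg z Hz) as [Dg Hb].
      pose proof (Rabs_flux_norm_rate_le z ltac:(lra)) as Hr. apply Rabs_le_between in Hr.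
      split; [apply (is_derive_opp g z (dg z) Dg)|].
      split; [apply is_derive_flux_norm; lra | lra]. }
    simpl in Hlow. lra.
  - apply (diff_le_of_derive_le flux_norm g flux_norm_rate dg); [lra|].
    intros z Hz. destruct (Hg z Hz) as [Dg Hb].
    pose proof (Rabs_flux_norm_rate_le z ltac:(lra)) as Hr. apply Rabs_le_between in Hr.
    split; [apply is_derive_flux_norm; lra|]. split; [exact Dg | lra].
Qed.

Lemma Rabs_cross_le_flux_norm t x y :
  Rabs (t ^ m * (v1 t * x - u1 t * y)) <= sqrt (x ^ 2 + y ^ 2) * flux_norm t.
Proof.
  eapply Rle_trans.
  - replace (t ^ m * (v1 t * x - u1 t * y)) with (x * (t ^ m * v1 t) + - y * (t ^ m * u1 t))
      by ring.
    apply Rabs_dot_le.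
  - replace ((- y) ^ 2) with (y ^ 2) by ring.
    apply Rmult_le_compat_l; [apply sqrt_pos|]. apply sqrt_le_1_alt. lra.
Qed.

Section Infinity.

Variables (K R1 : R).
Hypothesis decay : forall t, R1 < t -> sqnorm t * Rpower t (2 * s) <= K.

Lemma sqnorm_decay : exists R2, 1 <= R2 /\ 0 <= K /\
  forall t, R2 <= t -> sqnorm t <= K * Rpower t (- (2 * s)).
Proof.
  exists (Rmax R1 1 + 1).
  pose proof (Rmax_l R1 1). pose proof (Rmax_r R1 1).
  assert (Hdecay : forall t, Rmax R1 1 + 1 <= t -> sqnorm t <= K * Rpower t (- (2 * s))).
  { intros t Ht. pose proof (decay t ltac:(lra)). pose proof (Rpower_pos t (- (2 * s))).
    replace (sqnorm t) with (sqnorm t * Rpower t (2 * s) * Rpower t (- (2 * s))).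
    - apply Rmult_le_compat_r; lra.
    - rewrite Rmult_assoc, <- Rpower_plus, Rplus_opp_r, Rpower_O by lra. ring. }
  split; [lra|]. split; [|exact Hdecay].
  set (t := Rmax R1 1 + 1). pose proof (decay t ltac:(unfold t; lra)).
  pose proof (Rpower_pos t (2 * s)). assert (0 <= sqnorm t) by nra. nra.
Qed.

Lemma sqrt_sqnorm_decay : exists R2, 1 <= R2 /\
  forall t, R2 <= t -> sqnorm t <= K /\ sqrt (sqnorm t) <= sqrt K * Rpower t (- s).
Proof.
  destruct sqnorm_decay as [R2 [HR2 [HK Hdecay]]].
  exists R2. split; [exact HR2|].
  intros t Ht. pose proof (Hdecay t Ht) as Hd. pose proof (Rpower_pos t (- s)).
  assert (Hsq : Rpower t (- (2 * s)) = Rpower t (- s) ^ 2).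
  { simpl. rewrite Rmult_1_r, <- Rpower_plus. f_equal. ring. }
  split.
  - pose proof (Rpower_le_1 t (- (2 * s)) ltac:(lra) ltac:(lra)). nra.
  - rewrite <- (sqrt_pow2 (Rpower t (- s))), <- sqrt_mult by nra.
    apply sqrt_le_1_alt. rewrite <- Hsq. exact Hd.
Qed.

Lemma flux_norm_growth : s < INR m + 1 -> exists R2 C, 1 <= R2 /\
  forall t, R2 <= t -> sqrt (sqnorm t) <= sqrt K * Rpower t (- s) /\
                       flux_norm t <= C * Rpower t (INR m + 1 - s).
Proof.
  intros Hsup.
  destruct sqrt_sqnorm_decay as [R2 [HR2 Hdecay]].
  destruct (P_bounded K) as [KP HKP].
  set (e := INR m + 1 - s). set (K2 := (1 + KP + a * s) * sqrt K).
  assert (He : 0 < e) by (unfold e; lra).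
  assert (HKP0 : 0 <= KP)
    by (pose proof (P_nonneg R2); pose proof (HKP R2 ltac:(lra) (proj1 (Hdecay R2 (Rle_refl _))));
        lra).
  assert (HK2 : 0 <= K2) by (unfold K2; apply Rmult_le_pos; [nra|apply sqrt_pos]).
  exists R2, (flux_norm R2 + K2 / e). split; [exact HR2|].
  intros t Ht. split; [apply Hdecay; lra|].
  assert (Hvar : Rabs (flux_norm t - flux_norm R2)
                 <= K2 / e * Rpower t e - K2 / e * Rpower R2 e).
  { apply (flux_norm_variation (fun z => K2 / e * Rpower z e)
                               (fun z => K2 * Rpower z (INR m - s))); [lra|].
    intros z Hz. split.
    - replace (K2 * Rpower z (INR m - s)) with (K2 / e * (e * Rpower z (e - 1)))
        by (replace (e - 1) with (INR m - s) by (unfold e; ring); field; lra).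
      apply is_derive_scal, is_derive_Reals, derivable_pt_lim_power. lra.
    - destruct (Hdecay z ltac:(lra)) as [Hz2 Hzs].
      pose proof (HKP z ltac:(lra) Hz2). pose proof (P_nonneg z).
      pose proof (sqrt_pos (sqnorm z)). pose proof (sqrt_pos K).
      pose proof (Rpower_pos z (- s)). assert (0 < z ^ m) by (apply pow_lt; lra).
      replace (Rpower z (INR m - s)) with (z ^ m * Rpower z (- s))
        by (rewrite <- (Rpower_pow m z), <- Rpower_plus by lra; f_equal; ring).
      assert ((1 + P z + a * s) * sqrt (sqnorm z) <= (1 + KP + a * s) * (sqrt K * Rpower z (- s)))
        by (apply Rmult_le_compat; nra).
      unfold K2. nra. }
  apply Rabs_le_between in Hvar.
  pose proof (Rpower_ge_1 t e ltac:(lra) ltac:(lra)).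
  pose proof (Rpower_pos R2 e). pose proof (flux_norm_pos R2).
  assert (0 <= K2 / e) by (apply Rdiv_le_0_compat; lra).
  nra.
Qed.

Lemma energy_decay : s < INR m + 1 -> exists R2 C,
  forall t, R2 <= t -> Rabs (energy t) <= C * Rpower t (INR m + 1 - 2 * s).
Proof.
  intros Hsup.
  destruct (flux_norm_growth Hsup) as [R2 [C [HR2 Hgrowth]]].
  destruct sqnorm_decay as [R3 [HR3 [HK Hdecay]]].
  exists (Rmax R2 R3), (sqrt K * C + a * K / 2).
  pose proof (Rmax_l R2 R3). pose proof (Rmax_r R2 R3).
  intros t Ht.
  destruct (Hgrowth t ltac:(lra)) as [Hsq Hflux].
  pose proof (Hdecay t ltac:(lra)) as Hd.
  assert (Hrate : Rpower t (INR m + 1 - 2 * s) = Rpower t (- s) * Rpower t (INR m + 1 - s))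
    by (rewrite <- Rpower_plus; f_equal; ring).
  assert (Hcross : Rabs (t ^ m * (v1 t * u t - u1 t * v t))
                   <= sqrt K * C * Rpower t (INR m + 1 - 2 * s)).
  { eapply Rle_trans; [apply Rabs_cross_le_flux_norm|].
    pose proof (sqrt_pos (sqnorm t)). pose proof (flux_norm_pos t).
    rewrite Hrate.
    replace (sqrt K * C * (Rpower t (- s) * Rpower t (INR m + 1 - s)))
      with ((sqrt K * Rpower t (- s)) * (C * Rpower t (INR m + 1 - s))) by ring.
    apply Rmult_le_compat; lra. }
  assert (Hquad : a * (t * t ^ m) * sqnorm t / 2 <= a * K / 2 * Rpower t (INR m + 1 - 2 * s)).
  { replace (t * t ^ m) with (Rpower t (INR m + 1))
      by (rewrite <- S_INR, Rpower_pow by lra; reflexivity).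
    replace (Rpower t (INR m + 1 - 2 * s)) with (Rpower t (INR m + 1) * Rpower t (- (2 * s)))
      by (rewrite <- Rpower_plus; f_equal; ring).
    pose proof (Rpower_pos t (INR m + 1)).
    assert (a * Rpower t (INR m + 1) * sqnorm t
            <= a * Rpower t (INR m + 1) * (K * Rpower t (- (2 * s))))
      by (apply Rmult_le_compat_l; nra).
    lra. }
  assert (0 <= a * (t * t ^ m) * sqnorm t / 2).
  { pose proof (pow_lt t m ltac:(lra)). assert (0 <= sqnorm t) by nra.
    apply Rmult_le_pos; [|lra]. apply Rmult_le_pos; [|lra].
    apply Rmult_le_pos; [lra|]. apply Rmult_le_pos; lra. }
  unfold energy. eapply Rle_trans; [apply Rabs_triang|].
  rewrite (Rabs_pos_eq (a * (t * t ^ m) * sqnorm t / 2)) by assumption.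
  lra.
Qed.

Lemma energy_nonneg x : s < INR m + 1 -> INR m + 1 < 2 * s -> 0 < x -> 0 <= energy x.
Proof.
  intros Hsup Hsub Hx.
  destruct (Rle_or_lt 0 (energy x)) as [|Hneg]; [assumption|exfalso].
  destruct (energy_decay Hsup) as [R2 [C Hdecay]].
  set (eps := - energy x / (Rabs C + 1)).
  assert (Heps : 0 < eps) by (apply Rdiv_lt_0_compat; pose proof (Rabs_pos C); lra).
  destruct (Rpower_eventually_lt (INR m + 1 - 2 * s) eps ltac:(lra) Heps) as [T [HT Hsmall]].
  set (t := Rmax (Rmax T R2) x).
  pose proof (Rmax_l (Rmax T R2) x). pose proof (Rmax_r (Rmax T R2) x).
  pose proof (Rmax_l T R2). pose proof (Rmax_r T R2).
  pose proof (Hsmall t ltac:(unfold t; lra)) as Hp.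
  pose proof (Hdecay t ltac:(unfold t; lra)) as Hd.
  pose proof (energy_nonincreasing x t Hsub ltac:(unfold t; lra)) as Hmono.
  pose proof (Rpower_pos t (INR m + 1 - 2 * s)).
  assert (C * Rpower t (INR m + 1 - 2 * s) < - energy x).
  { apply (Rle_lt_trans _ ((Rabs C + 1) * Rpower t (INR m + 1 - 2 * s))).
    - apply Rmult_le_compat_r; [lra|]. pose proof (Rle_abs C). lra.
    - replace (- energy x) with ((Rabs C + 1) * eps)
        by (unfold eps; field; pose proof (Rabs_pos C); lra).
      apply Rmult_lt_compat_l; [pose proof (Rabs_pos C); lra | exact Hp]. }
  apply Rabs_le_between in Hd. lra.
Qed.

End Infinity.

Section Origin.

Variables (u0 v0 : R).
Hypothesis right_derive_zero : forall eta, 0 < eta -> exists delta, 0 < delta /\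
  forall h, 0 < h < delta -> sqrt ((u h - u0) ^ 2 + (v h - v0) ^ 2) <= eta * h.

Lemma bounded_near_zero : exists d M B, 0 < d <= 1 /\
  forall t, 0 < t <= d -> sqnorm t <= M /\ flux_norm t <= B.
Proof.
  destruct (right_derive_zero 1 Rlt_0_1) as [delta [Hdelta Hclose]].
  set (d := Rmin (delta / 2) 1). set (M := 2 * (u0 ^ 2 + v0 ^ 2) + 2).
  assert (Hd : 0 < d <= 1) by (unfold d; split; [apply Rmin_glb_lt|apply Rmin_r]; lra).
  assert (Hdd : d < delta) by (unfold d; pose proof (Rmin_l (delta / 2) 1); lra).
  assert (HM : forall t, 0 < t <= d -> sqnorm t <= M).
  { intros t Ht. pose proof (Hclose t ltac:(lra)) as Hc.
    assert ((u t - u0) ^ 2 + (v t - v0) ^ 2 <= t ^ 2).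
    { pose proof (pow2_ge_0 (u t - u0)). pose proof (pow2_ge_0 (v t - v0)).
      rewrite <- (pow2_sqrt ((u t - u0) ^ 2 + (v t - v0) ^ 2)) by lra.
      apply pow_incr. split; [apply sqrt_pos|lra]. }
    pose proof (pow2_ge_0 (u t - 2 * u0)). pose proof (pow2_ge_0 (v t - 2 * v0)).
    assert (t ^ 2 <= 1) by nra.
    unfold M. nra. }
  destruct (P_bounded M) as [KP HKP].
  assert (HKP0 : 0 <= KP) by (pose proof (P_nonneg d); pose proof (HKP d ltac:(lra) (HM d ltac:(lra))); lra).
  set (K3 := (1 + KP + a * s) * sqrt M).
  exists d, M, (flux_norm d + K3). split; [exact Hd|].
  intros t Ht. split; [apply HM, Ht|].
  assert (Hvar : Rabs (flux_norm d - flux_norm t) <= K3 * d - K3 * t).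
  { apply (flux_norm_variation (fun z => K3 * z) (fun _ => K3)); [lra|].
    intros z Hz. split; [auto_derive; [exact I|ring]|].
    pose proof (pow_incr z 1 m ltac:(lra)) as Hzm. rewrite pow1 in Hzm.
    pose proof (pow_lt z m ltac:(lra)).
    pose proof (HKP z ltac:(lra) (HM z ltac:(lra))). pose proof (P_nonneg z).
    assert (sqrt (sqnorm z) <= sqrt M) by (apply sqrt_le_1_alt, HM; lra).
    pose proof (sqrt_pos (sqnorm z)).
    assert ((1 + P z + a * s) * sqrt (sqnorm z) <= K3)
      by (unfold K3; apply Rmult_le_compat; nra).
    assert (0 <= (1 + P z + a * s) * sqrt (sqnorm z)) by (apply Rmult_le_pos; nra).
    rewrite Rmult_assoc. nra. }
  apply Rabs_le_between in Hvar.
  assert (0 <= K3) by (unfold K3; apply Rmult_le_pos; [nra|apply sqrt_pos]).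
  nra.
Qed.

Lemma is_derive_cross_origin t : 0 < t ->
  is_derive (fun x => v x * u0 - u x * v0) t (v1 t * u0 - u1 t * v0).
Proof.
  intros Ht.
  assert (Hdu : Derive (fun x => u x) t = u1 t) by exact (is_derive_unique _ _ _ (Du t Ht)).
  assert (Hdv : Derive (fun x => v x) t = v1 t) by exact (is_derive_unique _ _ _ (Dv t Ht)).
  auto_derive; [repeat split; eexists; first [apply Du | apply Dv]; exact Ht|].
  rewrite Hdu, Hdv. ring.
Qed.

Lemma Rabs_cross_origin_le x :
  Rabs (v x * u0 - u x * v0)
  <= sqrt (u0 ^ 2 + v0 ^ 2) * sqrt ((u x - u0) ^ 2 + (v x - v0) ^ 2).
Proof.
  replace (v x * u0 - u x * v0) with (u0 * (v x - v0) + - v0 * (u x - u0)) by ring.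
  eapply Rle_trans; [apply Rabs_dot_le|].
  replace ((- v0) ^ 2) with (v0 ^ 2) by ring.
  rewrite (Rplus_comm ((v x - v0) ^ 2)). apply Rle_refl.
Qed.

Lemma energy_le_near_origin t M B eta : 0 < t <= 1 -> 0 <= eta ->
  sqnorm t <= M -> flux_norm t <= B ->
  sqrt ((u t - u0) ^ 2 + (v t - v0) ^ 2) <= eta * t ->
  energy t <= t ^ m * (v1 t * u0 - u1 t * v0) + B * eta + a * M / 2 * t.
Proof.
  intros Ht Heta HM HB Hclose.
  pose proof (pow_incr t 1 m ltac:(lra)) as Htm. rewrite pow1 in Htm.
  pose proof (pow_lt t m ltac:(lra)).
  assert (Hcross : t ^ m * (v1 t * (u t - u0) - u1 t * (v t - v0)) <= B * eta).
  { eapply Rle_trans; [apply Rle_abs|]. eapply Rle_trans; [apply Rabs_cross_le_flux_norm|].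
    pose proof (flux_norm_pos t). pose proof (sqrt_pos ((u t - u0) ^ 2 + (v t - v0) ^ 2)).
    assert (eta * t <= eta) by nra.
    rewrite Rmult_comm. apply Rmult_le_compat; lra. }
  assert (Hquad : t ^ m * sqnorm t <= M) by (assert (0 <= sqnorm t) by nra; nra).
  assert (a * t * (t ^ m * sqnorm t) <= a * t * M) by (apply Rmult_le_compat_l; nra).
  unfold energy. nra.
Qed.

(* If [energy R0 > 0], then [energy >= energy R0] near the origin forces
   [Im (conj Q(0) Q)' >= energy R0 / 2] there, against [Q(t) = Q(0) + o(t)]. *)
Lemma energy_nonpos R0 : INR m + 1 < 2 * s -> 0 < R0 -> energy R0 <= 0.
Proof.
  intros Hsub HR0.
  destruct (Rle_or_lt (energy R0) 0) as [|Hpos]; [assumption|exfalso].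
  set (h0 := energy R0) in *.
  destruct bounded_near_zero as [d1 [M [B [Hd1 Hbound]]]].
  assert (HM : 0 <= M) by (destruct (Hbound d1 ltac:(lra)); nra).
  assert (HB : 0 <= B) by (destruct (Hbound d1 ltac:(lra)); pose proof (flux_norm_pos d1); lra).
  set (c0 := sqrt (u0 ^ 2 + v0 ^ 2)). assert (Hc0 : 0 <= c0) by apply sqrt_pos.
  set (eta := h0 / (4 * (B + c0 + 1))).
  assert (Heta : 0 < eta) by (apply Rdiv_lt_0_compat; lra).
  assert (Heta_small : forall x, 0 <= x <= B + c0 -> x * eta <= h0 / 4).
  { intros x Hx. unfold eta.
    replace (x * (h0 / (4 * (B + c0 + 1)))) with (h0 / 4 * (x / (B + c0 + 1))) by (field; lra).
    assert (x / (B + c0 + 1) <= 1) by (apply Rle_div_l; lra). nra. }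
  destruct (right_derive_zero eta Heta) as [delta [Hdelta Hclose]].
  set (tq := h0 / (2 * a * (M + 1))).
  assert (Htq : 0 < tq /\ a * (M + 1) / 2 * tq = h0 / 4)
    by (unfold tq; split; [apply Rdiv_lt_0_compat; nra | field; nra]).
  set (d2 := Rmin (Rmin d1 R0) (Rmin tq (delta / 2))).
  assert (Hd2 : 0 < d2 /\ d2 <= d1 /\ d2 <= R0 /\ d2 <= tq /\ d2 < delta).
  { pose proof (Rmin_l (Rmin d1 R0) (Rmin tq (delta / 2))).
    pose proof (Rmin_r (Rmin d1 R0) (Rmin tq (delta / 2))).
    pose proof (Rmin_l d1 R0). pose proof (Rmin_r d1 R0).
    pose proof (Rmin_l tq (delta / 2)). pose proof (Rmin_r tq (delta / 2)).
    fold d2 in H, H0. repeat split; try lra.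
    unfold d2. repeat apply Rmin_glb_lt; lra. }
  apply (no_steep_sublinear (fun x => v x * u0 - u x * v0) (fun x => v1 x * u0 - u1 x * v0)
                            (h0 / 2) d2); [lra|lra| |].
  - intros t Ht. split; [apply is_derive_cross_origin; lra|].
    pose proof (energy_nonincreasing t R0 Hsub ltac:(lra)) as Hmono. fold h0 in Hmono.
    destruct (Hbound t ltac:(lra)) as [HMt HBt].
    pose proof (energy_le_near_origin t M B eta ltac:(lra) ltac:(lra) HMt HBt
                                      (Hclose t ltac:(lra))) as Hnear.
    pose proof (Heta_small B ltac:(lra)).
    assert (a * M / 2 * t <= h0 / 4)
      by (rewrite <- (proj2 Htq); apply Rmult_le_compat; nra).
    pose proof (pow_incr t 1 m ltac:(lra)) as Htm. rewrite pow1 in Htm.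
    pose proof (pow_lt t m ltac:(lra)).
    nra.
  - intros x Hx.
    pose proof (Hclose x ltac:(lra)). pose proof (Heta_small c0 ltac:(lra)).
    eapply Rle_trans; [apply Rabs_cross_origin_le|]. fold c0.
    apply (Rle_trans _ (c0 * (eta * x))); [apply Rmult_le_compat_l; lra|nra].
Qed.

End Origin.

Lemma radial_solution_vanishes (K R1 u0 v0 : R) :
  s < INR m + 1 -> INR m + 1 < 2 * s ->
  (forall t, R1 < t -> sqnorm t * Rpower t (2 * s) <= K) ->
  (forall eta, 0 < eta -> exists delta, 0 < delta /\
     forall h, 0 < h < delta -> sqrt ((u h - u0) ^ 2 + (v h - v0) ^ 2) <= eta * h) ->
  forall t, 0 < t -> u t = 0 /\ v t = 0.
Proof.
  intros Hsup Hsub Hdecay Horigin t Ht.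
  assert (Hzero : forall y, 0 < y -> energy y = 0).
  { intros y Hy. pose proof (energy_nonneg K R1 Hdecay y Hsup Hsub Hy).
    pose proof (energy_nonpos u0 v0 Horigin y Hsub Hy). lra. }
  assert (Hrate : a * ((INR m + 1) / 2 - s) * t ^ m * sqnorm t = 0).
  { rewrite <- (is_derive_unique _ _ _ (is_derive_energy t Ht)), <- (Derive_const 0 t).
    apply Derive_ext_loc. exists (mkposreal (t / 2) ltac:(lra)). intros y Hy.
    apply Hzero. change (Rabs (y - t) < t / 2) in Hy. apply Rabs_def2 in Hy. lra. }
  assert (a * ((INR m + 1) / 2 - s) * t ^ m <> 0).
  { pose proof (pow_lt t m Ht). assert (a * ((INR m + 1) / 2 - s) < 0) by nra. nra. }
  assert (sqnorm t = 0) by (apply (Rmult_eq_reg_l (a * ((INR m + 1) / 2 - s) * t ^ m)); lra).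
  split; nra.
Qed.

End RadialSystem.

Lemma abs_pow_nonneg (z : C) (sigma : R) : 0 <= abs_pow z sigma.
Proof. unfold abs_pow, rpow_nn. destruct Rlt_dec; [left; apply Rpower_pos | lra]. Qed.

Lemma abs_pow_bounded (Q : R -> C) (sigma : R) : 0 < sigma ->
  forall M, exists KP, forall t, 0 < t ->
    fst (Q t) ^ 2 + snd (Q t) ^ 2 <= M -> abs_pow (Q t) sigma <= KP.
Proof.
  intros Hsigma M. exists (Rpower (sqrt (Rabs M) + 1) (2 * sigma)). intros t Ht HM.
  unfold abs_pow, rpow_nn. destruct Rlt_dec as [Hpos|]; [|left; apply Rpower_pos].
  apply Rle_Rpower_l; [lra|]. split; [exact Hpos|].
  assert (Cmod (Q t) <= sqrt (Rabs M))
    by (apply sqrt_le_1_alt; pose proof (Rle_abs M); lra).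
  lra.
Qed.

Lemma Cmod_inv_Q1 (a s t : R) : Cmod (inv_Q1 a s t) = Rpower t (1 / s).
Proof.
  unfold inv_Q1. rewrite Cmod_mult, Cmod_R, Rabs_pos_eq by (left; apply Rpower_pos).
  unfold Cmod. simpl. rewrite !Rmult_1_r, <- !Rsqr_def, Rplus_comm, sin2_cos2, sqrt_1.
  ring.
Qed.

Lemma sqnorm_decay_of_inv_Q1_limit (Q : R -> C) (a sigma : R) (c1 : C) :
  filterlim (fun rho => Cmult (Q rho) (inv_Q1 a sigma rho)) (Rbar_locally p_infty) (locally c1) ->
  exists K R1, forall t, R1 < t ->
    (fst (Q t) ^ 2 + snd (Q t) ^ 2) * Rpower t (2 * (1 / sigma)) <= K.
Proof.
  intros Hlim.
  apply filterlim_locally with (eps := mkposreal 1 Rlt_0_1) in Hlim.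
  destruct Hlim as [M HM].
  exists ((Cmod c1 + sqrt 2) ^ 2), (Rmax M 0). intros t Ht.
  pose proof (Rmax_l M 0). pose proof (Rmax_r M 0).
  pose proof (C_NormedModule_mixin_compat2 _ _ _ (HM t ltac:(lra))) as Hball. simpl in Hball.
  assert (Hprod : Cmod (Q t * inv_Q1 a sigma t) <= Cmod c1 + sqrt 2).
  { replace (Q t * inv_Q1 a sigma t)%C with (Cplus (Cminus (Q t * inv_Q1 a sigma t)%C c1) c1)
      by ring.
    eapply Rle_trans; [apply Cmod_triangle|].
    change (minus (Q t * inv_Q1 a sigma t)%C c1) with (Cminus (Q t * inv_Q1 a sigma t)%C c1)
      in Hball.
    lra. }
  rewrite Cmod_mult, Cmod_inv_Q1 in Hprod.
  assert (Hsq : fst (Q t) ^ 2 + snd (Q t) ^ 2 = Cmod (Q t) ^ 2)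
    by (unfold Cmod; rewrite pow2_sqrt; [reflexivity | nra]).
  rewrite Hsq.
  replace (Rpower t (2 * (1 / sigma))) with (Rpower t (1 / sigma) ^ 2)
    by (simpl; rewrite Rmult_1_r, <- Rpower_plus; f_equal; ring).
  rewrite <- Rpow_mult_distr. apply pow_incr. split; [|exact Hprod].
  apply Rmult_le_pos; [apply Cmod_ge_0 | left; apply Rpower_pos].
Qed.

Lemma near_origin_of_right_derive_zero (Q : R -> C) :
  filterlim (fun h => Cmult (RtoC (/ h)) (Cminus (Q h) (Q 0))) (at_right 0) (locally (RtoC 0)) ->
  forall eta, 0 < eta -> exists delta, 0 < delta /\ forall h, 0 < h < delta ->
    sqrt ((fst (Q h) - fst (Q 0)) ^ 2 + (snd (Q h) - snd (Q 0)) ^ 2) <= eta * h.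
Proof.
  intros Hlim eta Heta.
  apply filterlim_locally with (eps := mkposreal (eta / 2) ltac:(lra)) in Hlim.
  destruct Hlim as [delta Hdelta].
  exists delta. split; [apply cond_pos|]. intros h Hh.
  assert (Hb : ball 0 delta h)
    by (change (Rabs (h - 0) < delta); rewrite Rminus_0_r, Rabs_pos_eq; lra).
  pose proof (C_NormedModule_mixin_compat2 _ _ _ (Hdelta h Hb ltac:(lra))) as Hball.
  simpl in Hball.
  change (minus (RtoC (/ h) * Cminus (Q h) (Q 0))%C (RtoC 0))
    with (Cminus (RtoC (/ h) * Cminus (Q h) (Q 0))%C (RtoC 0)) in Hball.
  replace (Cminus (RtoC (/ h) * Cminus (Q h) (Q 0))%C (RtoC 0))
    with (RtoC (/ h) * Cminus (Q h) (Q 0))%C in Hball by ring.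
  rewrite Cmod_mult, Cmod_R, Rabs_pos_eq in Hball by (left; apply Rinv_0_lt_compat; lra).
  assert (Hsqrt2 : sqrt 2 < 2).
  { apply (Rlt_le_trans _ (sqrt (2 * 2))); [apply sqrt_lt_1_alt; lra|].
    rewrite sqrt_square; lra. }
  change (sqrt ((fst (Q h) - fst (Q 0)) ^ 2 + (snd (Q h) - snd (Q 0)) ^ 2))
    with (Cmod (Cminus (Q h) (Q 0))).
  apply (Rmult_le_reg_l (/ h)); [apply Rinv_0_lt_compat; lra|].
  replace (/ h * (eta * h)) with eta by (field; lra).
  pose proof (sqrt_pos 2). nra.
Qed.

Lemma value_at_origin_zero (Q : R -> C) :
  (forall t, 0 < t -> Q t = RtoC 0) ->
  filterlim (fun h => Cmult (RtoC (/ h)) (Cminus (Q h) (Q 0))) (at_right 0) (locally (RtoC 0)) ->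
  Q 0 = RtoC 0.
Proof.
  intros Hpos Hlim.
  destruct (near_origin_of_right_derive_zero Q Hlim 1 Rlt_0_1) as [delta [Hdelta Hclose]].
  assert (Hsmall : forall h, 0 < h < delta -> Cmod (Q 0) <= h).
  { intros h Hh. pose proof (Hclose h Hh) as Hc. rewrite (Hpos h (proj1 Hh)) in Hc.
    simpl in Hc. rewrite Rmult_1_l in Hc.
    unfold Cmod. replace (fst (Q 0) ^ 2 + snd (Q 0) ^ 2)
      with ((0 - fst (Q 0)) ^ 2 + (0 - snd (Q 0)) ^ 2) by ring.
    exact Hc. }
  apply Cmod_eq_0. apply Rle_antisym; [|apply Cmod_ge_0].
  apply Rnot_lt_le. intros Hpos0.
  pose proof (Hsmall (Rmin (Cmod (Q 0)) delta / 2)).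
  pose proof (Rmin_l (Cmod (Q 0)) delta). pose proof (Rmin_r (Cmod (Q 0)) delta).
  assert (0 < Rmin (Cmod (Q 0)) delta) by (apply Rmin_glb_lt; lra).
  lra.
Qed.

Lemma radial_ode_components (m : nat) (sigma a rho : R) (q q' q'' : C) :
  Cplus (Cplus (Cplus (Cplus q'' (Cmult (RtoC ((INR (S m) - 1) / rho)) q'))
          (Copp q))
          (Cmult (Cmult Ci (RtoC a))
                 (Cplus (Cmult (RtoC (1 / sigma)) q) (Cmult (RtoC rho) q'))))
        (Cmult (RtoC (abs_pow q sigma)) q) = RtoC 0 ->
  fst q'' + INR m / rho * fst q' - fst q - a * (1 / sigma * snd q + rho * snd q')
    + abs_pow q sigma * fst q = 0 /\
  snd q'' + INR m / rho * snd q' - snd q + a * (1 / sigma * fst q + rho * fst q')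
    + abs_pow q sigma * snd q = 0.
Proof.
  intros Hode. rewrite S_INR in Hode.
  replace (INR m + 1 - 1) with (INR m) in Hode by ring.
  split; [apply (f_equal fst) in Hode | apply (f_equal snd) in Hode]; simpl in Hode; lra.
Qed.

Theorem lemma5 (d : nat) (sigma a : R) (Q Q' Q'' : R -> C) :
  (1 <= d)%nat -> 0 < sigma -> 1 < sigma * INR d -> sigma * INR d < 2 -> 0 < a ->
  (forall rho, 0 < rho -> is_derive Q rho (Q' rho)) ->
  (forall rho, 0 < rho -> is_derive Q' rho (Q'' rho)) ->
  (forall rho, 0 < rho ->
     Cplus (Cplus (Cplus (Cplus (Q'' rho)
             (Cmult (RtoC ((INR d - 1) / rho)) (Q' rho)))
             (Copp (Q rho)))
             (Cmult (Cmult Ci (RtoC a))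
                    (Cplus (Cmult (RtoC (1 / sigma)) (Q rho))
                           (Cmult (RtoC rho) (Q' rho)))))
           (Cmult (RtoC (abs_pow (Q rho) sigma)) (Q rho)) = RtoC 0) ->
  filterlim (fun h => Cmult (RtoC (/ h)) (Cminus (Q h) (Q 0)))
            (at_right 0) (locally (RtoC 0)) ->
  (exists c1 : C,
     filterlim (fun rho => Cmult (Q rho) (inv_Q1 a sigma rho))
               (Rbar_locally p_infty) (locally c1)) ->
  forall rho, 0 <= rho -> Q rho = RtoC 0.
Proof.
  intros Hd Hsigma Hlow Hhigh Ha DQ DQ' Hode Horigin [c1 Hinf].
  destruct d as [|m]; [lia|]. rewrite S_INR in Hlow, Hhigh.
  assert (Hs : 0 < 1 / sigma) by (apply Rdiv_lt_0_compat; lra).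
  assert (Hsup : 1 / sigma < INR m + 1)
    by (apply (Rmult_lt_reg_l sigma); [lra|]; field_simplify; lra).
  assert (Hsub : INR m + 1 < 2 * (1 / sigma))
    by (apply (Rmult_lt_reg_l sigma); [lra|]; field_simplify; lra).
  destruct (sqnorm_decay_of_inv_Q1_limit Q a sigma c1 Hinf) as [K [R1 Hdecay]].
  assert (Hpos : forall t, 0 < t -> Q t = RtoC 0).
  { intros t Ht.
    destruct (radial_solution_vanishes m (1 / sigma) a
      (fun t => fst (Q t)) (fun t => snd (Q t)) (fun t => fst (Q' t)) (fun t => snd (Q' t))
      (fun t => fst (Q'' t)) (fun t => snd (Q'' t)) (fun t => abs_pow (Q t) sigma)
      Ha Hs (fun t => abs_pow_nonneg (Q t) sigma) (abs_pow_bounded Q sigma Hsigma)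
      (fun t Ht => is_derive_fst Q t _ (DQ t Ht)) (fun t Ht => is_derive_snd Q t _ (DQ t Ht))
      (fun t Ht => is_derive_fst Q' t _ (DQ' t Ht)) (fun t Ht => is_derive_snd Q' t _ (DQ' t Ht))
      (fun t Ht => proj1 (radial_ode_components m sigma a t _ _ _ (Hode t Ht)))
      (fun t Ht => proj2 (radial_ode_components m sigma a t _ _ _ (Hode t Ht)))
      K R1 (fst (Q 0)) (snd (Q 0)) Hsup Hsub Hdecay
      (near_origin_of_right_derive_zero Q Horigin) t Ht) as [Hre Him].
    rewrite (surjective_pairing (Q t)). simpl in Hre, Him. rewrite Hre, Him. reflexivity. }
  intros rho [Hrho | <-]; [exact (Hpos rho Hrho) | exact (value_at_origin_zero Q Hpos Horigin)].
Qed.
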